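(* Let $\psi$ be a CNF formula with only positive literals, with clauses $C_1,\dots,C_m$ each consisting of three distinct variables, and variables $x_1,\dots,x_p$, in which every variable appears in at least $3$ clauses. Let $G$ be the graph constructed as follows: (1) for each variable $x_i$ create a cycle $D_i$ whose number of vertices equals the number of clauses containing $x_i$, and, for each clause containing $x_i$, designate a distinct vertex of $D_i$ as corresponding to that clause; (2) add a vertex $a$ adjacent to every vertex of all cycles $D_1,\dots,D_p$; (3) subdivide every edge of the cycles and every edge incident to $a$ exactly twice (replacing it by a path with three edges); (4) for each clause $C_i=\{x_j,x_k,x_\ell\}$ add a triangle on new vertices $u_{ij},u_{ik},u_{i\ell}$ and make $u_{ij}$ adjacent to the vertex of $D_j$ corresponding to $C_i$, $u_{ik}$ adjacent to the vertex of $D_k$ corresponding to $C_i$, and $u_{i\ell}$ adjacent to the vertex of $D_\ell$ corresponding to $C_i$. If $\psi$ has an assignment in which every clause contains exactly one true variable, then $G$ has a $1$-shallow topological minor of density $\frac{5m}{2m+1}$.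
   Context: A graph $H$ is a $1$-shallow topological minor of $G$ if some graph obtained from $H$ by subdividing each edge at most twice is isomorphic to a subgraph of $G$. The density of $H$ is $\|H\|/|H|$ (number of edges divided by number of vertices). *)

From mathcomp Require Import all_boot all_order all_algebra.
Set Implicit Arguments. Unset Strict Implicit. Unset Printing Implicit Defensive.
Import Order.TTheory GRing.Theory Num.Theory.

(* Graphs: a (simple) graph is a symmetric irreflexive relation on a   *)
(* finite vertex type.                                                 *)

Definition nedges (V : finType) (e : rel V) : nat :=
  #|[set E : {set V} | [exists x, exists y,
       [&& x != y, e x y & E == [set x; y]]]]|.

Definition density (V : finType) (e : rel V) : rat :=
  ((nedges e)%:R / (#|V|)%:R)%R.

(* H is a 1-shallow topological minor of G: some graph obtained from H
   by subdividing each edge at most twice is isomorphic to a subgraph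
   of G. *)
Definition shallow1_topminor (V W : finType) (eH : rel V) (eG : rel W) : Prop :=
  exists (f : V -> W) (P : V -> V -> seq W),
    [/\ injective f,
        (forall u v, eH u v ->
           [/\ size (P u v) <= 2, P v u = rev (P u v),
               path eG (f u) (rcons (P u v) (f v)),
               uniq (P u v) & all (fun w => w \notin codom f) (P u v)]) &
        (forall u v u' v', eH u v -> eH u' v' ->
           [set u; v] != [set u'; v'] -> [disjoint P u v & P u' v'])].

(* Positive CNF formula: m clauses over p variables; clause i is the   *)
(* set of variables c i.                                               *)

Definition deg (p m : nat) (c : 'I_m -> {set 'I_p}) (j : 'I_p) : nat :=
  #|[set i | j \in c i]|.

(* incidences (variable j, clause i) with x_j in C_i; these index the
   vertices of the cycles D_j (vertex of D_j corresponding to C_i) *)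
Definition Inc (p m : nat) (c : 'I_m -> {set 'I_p}) : finType :=
  {x : 'I_p * 'I_m | x.1 \in c x.2}.

(* pos j : the position (0 .. deg j - 1) along the cycle D_j of the
   vertex corresponding to each clause containing x_j; this encodes an
   arbitrary choice of the cycle D_j and of its designated vertices. *)
Definition cycle_order (p m : nat) (c : 'I_m -> {set 'I_p})
    (pos : 'I_p -> 'I_m -> nat) : Prop :=
  forall j, {in [set i | j \in c i] &, injective (pos j)} /\
            (forall i, j \in c i -> pos j i < deg c j).

Definition nextc (p m : nat) (c : 'I_m -> {set 'I_p})
    (pos : 'I_p -> 'I_m -> nat) (v w : Inc c) : bool :=
  ((val v).1 == (val w).1) &&
  (pos (val v).1 (val w).2 == (pos (val v).1 (val v).2).+1 %% deg c (val v).1).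

(* Vertices of G:
     None                       : the vertex a
     Some (inl (inl (inl v)))   : cycle vertex v of D_j
     Some (inl (inl (inr (v,k)))): k-th subdivision vertex of the cycle
                                   edge from v to its successor
     Some (inl (inr (v,k)))     : k-th subdivision vertex of edge a--v
     Some (inr v)               : triangle vertex u_{ij} for v = (j,i) *)
Definition gvert (p m : nat) (c : 'I_m -> {set 'I_p}) : finType :=
  option (((Inc c + (Inc c * 'I_2)) + (Inc c * 'I_2)) + Inc c)%type.

Definition gedge0 (p m : nat) (c : 'I_m -> {set 'I_p})
    (pos : 'I_p -> 'I_m -> nat) (x y : gvert c) : bool :=
  match x, y with
  | None, Some (inl (inr (_, k))) => val k == 0
  | Some (inl (inr (v, k))), Some (inl (inr (w, l))) =>
      [&& v == w, val k == 0 & val l == 1]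
  | Some (inl (inr (v, k))), Some (inl (inl (inl w))) =>
      (v == w) && (val k == 1)
  | Some (inl (inl (inl v))), Some (inl (inl (inr (w, k)))) =>
      (v == w) && (val k == 0)
  | Some (inl (inl (inr (v, k)))), Some (inl (inl (inr (w, l)))) =>
      [&& v == w, val k == 0 & val l == 1]
  | Some (inl (inl (inr (v, k)))), Some (inl (inl (inl w))) =>
      (val k == 1) && nextc pos v w
  | Some (inr v), Some (inr w) => (v != w) && ((val v).2 == (val w).2)
  | Some (inr v), Some (inl (inl (inl w))) => v == w
  | _, _ => false
  end.

Definition gadj (p m : nat) (c : 'I_m -> {set 'I_p})
    (pos : 'I_p -> 'I_m -> nat) : rel (gvert c) :=
  fun x y => gedge0 pos x y || gedge0 pos y x.
Arguments gadj {p m} c pos.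
Arguments deg {p m} c j.

From mathcomp Require Import all_boot all_order all_algebra.
From mathcomp Require Import zify.
Set Implicit Arguments. Unset Strict Implicit. Unset Printing Implicit Defensive.

(* Let sigma be the assignment making exactly one variable of each clause true.
   The branch vertices of H are a and the 2m occurrences of false variables in
   clauses.  H joins a to every occurrence (through the subdivided edges at a);
   it contains every edge of the cycle D_j of a false variable x_j (all
   occurrences of x_j are branch vertices, and D_j has length at least 3, so
   these are 2m distinct edges); and it joins the two false occurrences of each
   clause through the clause triangle.  So H has 2m + 2m + m = 5m edges on
   2m + 1 vertices.  The paths are internally disjoint because every internal
   vertex determines the edge of H whose path it lies on. *)

Lemma eq_set2 (T : finType) (a b a' b' : T) :
  [set a; b] = [set a'; b'] -> (a = a' /\ b = b') \/ (a = b' /\ b = a').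
Proof.
move=> E.
have /set2P ha : a \in [set a'; b'] by rewrite -E set21.
have /set2P hb : b \in [set a'; b'] by rewrite -E set22.
have /set2P ha' : a' \in [set a; b] by rewrite E set21.
have /set2P hb' : b' \in [set a; b] by rewrite E set22.
by case: ha hb ha' hb' => -> [] -> [] ? [] ?; subst; auto.
Qed.

Lemma nedges_eq_card (V E : finType) (e : rel V) (s t : E -> V) :
    injective (fun x => [set s x; t x]) ->
    (forall x, s x != t x /\ e (s x) (t x)) ->
    (forall u v, u != v -> e u v -> exists x, [set u; v] = [set s x; t x]) ->
  nedges e = #|E|.
Proof.
move=> st_inj st_edge st_onto; rewrite /nedges -[RHS](card_imset _ st_inj).
apply: eq_card => X; rewrite inE; apply/existsP/imsetP.
- case=> u /existsP[v /and3P[uv euv /eqP->]].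
  by have [x ->] := st_onto u v uv euv; exists x.
- case=> x _ ->; have [stx ex] := st_edge x.
  by exists (s x); apply/existsP; exists (t x); rewrite stx ex eqxx.
Qed.

Lemma shallow1_topminor_owner (V W : finType) (eH : rel V) (eG : rel W)
    (f : V -> W) (P : V -> V -> seq W) (owner : W -> {set V}) :
    injective f ->
    (forall u v, eH u v ->
       [/\ size (P u v) <= 2, P v u = rev (P u v),
           path eG (f u) (rcons (P u v) (f v)),
           uniq (P u v) & all (fun w => w \notin codom f) (P u v)]) ->
    (forall u v z, eH u v -> z \in P u v -> owner z = [set u; v]) ->
  shallow1_topminor eH eG.
Proof.
move=> f_inj P_path P_owner; exists f, P; split=> // u v u' v' e e' uv_u'v'.
rewrite disjoint_has; apply/hasP => -[z z_uv z_u'v'].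
by move: uv_u'v'; rewrite -(P_owner _ _ _ e z_uv) -(P_owner _ _ _ e' z_u'v') eqxx.
Qed.

Lemma modnS k d : k < d -> k.+1 %% d = if k.+1 < d then k.+1 else 0.
Proof.
move=> k_lt; case: ltnP => [/modn_small // | d_le].
have -> : k.+1 = d by lia.
by rewrite modnn.
Qed.

Lemma modnS_neq k d : 1 < d -> k < d -> k.+1 %% d != k.
Proof. by move=> ? k_lt; rewrite modnS //; case: ifP; lia. Qed.

Lemma modnS_asym k l d : 2 < d -> k < d -> l < d -> l = k.+1 %% d -> l.+1 %% d != k.
Proof.
move=> d_gt2 k_lt l_lt; rewrite !modnS //.
by case: ifP; case: ifP; lia.
Qed.

Lemma injective_bounded_onto (T : finType) (S : {set T}) (pos : T -> nat) :
    {in S &, injective pos} -> {in S, forall x, pos x < #|S|} ->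
  forall k, k < #|S| -> exists2 x, x \in S & pos x = k.
Proof.
move=> pos_inj pos_lt k k_lt.
have uniq_pos : uniq (map pos (enum S)).
  by rewrite map_inj_in_uniq ?enum_uniq // => x y; rewrite !mem_enum; apply: pos_inj.
have sub_pos : {subset map pos (enum S) <= iota 0 #|S|}.
  by move=> y /mapP[x]; rewrite mem_enum => xS ->; rewrite mem_iota pos_lt.
have [|_ eq_pos] := uniq_min_size uniq_pos sub_pos.
  by rewrite size_iota size_map -cardE.
have : k \in iota 0 #|S| by rewrite mem_iota.
rewrite -eq_pos => /mapP[x].
by rewrite mem_enum => xS ->; exists x.
Qed.

Section SetEnumeration.
Variables (T : finType) (A : {set T}) (n : nat).
Hypothesis card_A : #|A| = n.

Definition enum_at (k : 'I_n) : T := enum_val (cast_ord (esym card_A) k).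

Lemma enum_at_mem k : enum_at k \in A.
Proof. exact: enum_valP. Qed.

Lemma enum_at_inj : injective enum_at.
Proof. by move=> k l /enum_val_inj /(can_inj (@cast_ordK _ _ _)). Qed.

Lemma enum_at_onto x : x \in A -> exists k, enum_at k = x.
Proof.
move=> xA; exists (cast_ord card_A (enum_rank_in xA x)).
by rewrite /enum_at cast_ordK enum_rankK_in.
Qed.

End SetEnumeration.

Section Construction.
Variables (p m : nat) (c : 'I_m -> {set 'I_p}) (pos : 'I_p -> 'I_m -> nat).
Variable sigma : 'I_p -> bool.
Hypothesis card_clause : forall i, #|c i| = 3.
Hypothesis deg_ge3 : forall j, 3 <= deg c j.
Hypothesis pos_cycle : cycle_order c pos.
Hypothesis one_true : forall i, #|[set x in c i | sigma x]| = 1.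

Definition false_vars i := [set x in c i | ~~ sigma x].

Lemma card_false_vars i : #|false_vars i| = 2.
Proof.
have := cardsID [set x | sigma x] (c i).
rewrite card_clause -setIdE (_ : c i :\: _ = false_vars i) ?one_true => [[] //|].
by apply/setP => x; rewrite !inE andbC.
Qed.

(* (i, b) stands for the b-th false variable of clause C_i. *)
Definition occ := ('I_m * 'I_2)%type.

Definition var (o : occ) : 'I_p := enum_at (card_false_vars o.1) o.2.

Lemma var_false_in_clause o : var o \in false_vars o.1.
Proof. exact: enum_at_mem. Qed.

Lemma var_in_clause o : var o \in c o.1.
Proof. by have := var_false_in_clause o; rewrite inE => /andP[]. Qed.

Lemma var_false o : ~~ sigma (var o).
Proof. by have := var_false_in_clause o; rewrite inE => /andP[]. Qed.

Lemma var_inj_clause o o' : o.1 = o'.1 -> var o = var o' -> o = o'.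
Proof.
case: o o' => i b [i' b'] /= <-; rewrite /var /= => /enum_at_inj.
by move->.
Qed.

Definition inc (o : occ) : Inc c := Sub (var o, o.1) (var_in_clause o).

Lemma inc_inj : injective inc.
Proof. by move=> o o' /(congr1 val) [? ?]; apply: var_inj_clause. Qed.

Definition cyc (o o' : occ) := nextc pos (inc o) (inc o').

Lemma cycE o o' : cyc o o' =
  (var o == var o') && (pos (var o) o'.1 == (pos (var o) o.1).+1 %% deg c (var o)).
Proof. by []. Qed.

Lemma pos_lt_deg o : pos (var o) o.1 < deg c (var o).
Proof. exact: (pos_cycle (var o)).2 (var_in_clause o). Qed.

Lemma cyc_functional o o1 o2 : cyc o o1 -> cyc o o2 -> o1 = o2.
Proof.
rewrite !cycE => /andP[/eqP var1 /eqP pos1] /andP[/eqP var2 /eqP pos2].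
apply: var_inj_clause; last by rewrite -var1 -var2.
apply: (pos_cycle (var o)).1; last by rewrite pos1 pos2.
  by rewrite inE var1 var_in_clause.
by rewrite inE var2 var_in_clause.
Qed.

Lemma cyc_exists o : exists o', cyc o o'.
Proof.
have [pos_inj pos_lt] := pos_cycle (var o).
have deg_gt0 : 0 < deg c (var o) by apply: leq_trans (deg_ge3 _).
have [|i] := injective_bounded_onto pos_inj _ (ltn_pmod (pos (var o) o.1).+1 deg_gt0).
  by move=> i; rewrite inE; apply: pos_lt.
rewrite inE => o_in_i pos_i.
have [b var_ib] : exists b, var (i, b) = var o.
  by apply: (enum_at_onto (card_false_vars i)); rewrite inE o_in_i var_false.
by exists (i, b); rewrite cycE var_ib eqxx; apply/eqP.
Qed.

Definition succ o := odflt o [pick o' | cyc o o'].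

Lemma cyc_succ o : cyc o (succ o).
Proof.
rewrite /succ; case: pickP => [o' //|no_succ].
by have [o' /[!no_succ]] := cyc_exists o.
Qed.

Lemma cyc_succE o o' : cyc o o' = (o' == succ o).
Proof.
apply/idP/eqP => [cyc_o'|->]; last exact: cyc_succ.
exact: cyc_functional cyc_o' (cyc_succ o).
Qed.

Lemma var_succ o : var (succ o) = var o.
Proof. by have /andP[/eqP] := cyc_succ o. Qed.

Lemma pos_succ o :
  pos (var o) (succ o).1 = (pos (var o) o.1).+1 %% deg c (var o).
Proof. by have /andP[_ /eqP] := cyc_succ o. Qed.

Lemma succ_neq o : succ o != o.
Proof.
apply/eqP => succ_o; have := pos_succ o; rewrite succ_o; apply/eqP.
by rewrite eq_sym modnS_neq ?pos_lt_deg //; apply: leq_trans (deg_ge3 _).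
Qed.

Lemma succ_succ_neq o : succ (succ o) != o.
Proof.
apply/eqP => succ2_o; have := pos_succ (succ o).
rewrite var_succ succ2_o; apply/eqP; rewrite eq_sym.
apply: modnS_asym (pos_succ o); rewrite ?deg_ge3 ?pos_lt_deg //.
by rewrite -[X in pos X]var_succ -[X in deg c X]var_succ pos_lt_deg.
Qed.

Lemma succ_clause_neq o : (succ o).1 != o.1.
Proof.
apply/eqP => succ_o1; have := succ_neq o.
by rewrite (var_inj_clause succ_o1 (var_succ o)) eqxx.
Qed.

Definition mate (o : occ) : occ := (o.1, rev_ord o.2).

Lemma mateK : involutive mate.
Proof. by case=> i b; rewrite /mate rev_ordK. Qed.

Lemma mate_neq o : mate o != o.
Proof. by case: o => i b; rewrite xpair_eqE eqxx -val_eqE /=; case: b => [[|[|]]]. Qed.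

Lemma mate_ord0 i : mate (i, ord0) = (i, ord_max).
Proof. by congr pair; apply: val_inj. Qed.

Lemma ord2P (b : 'I_2) : b = ord0 \/ b = ord_max.
Proof. by case: b => [[|[|]] ?]; [left | right |]; try apply: val_inj. Qed.

Lemma same_clause o o' : o'.1 = o.1 -> o' = o \/ o' = mate o.
Proof.
case: o o' => i b [_ b'] /= ->.
case: (ord2P b) (ord2P b') => -> [] ->; rewrite -?mate_ord0 ?mateK; by [left | right].
Qed.

Definition hvert := option occ.

Definition hadj : rel hvert := fun x y =>
  match x, y with
  | None, Some _ | Some _, None => true
  | Some o, Some o' => [|| o' == succ o, o == succ o' | o' == mate o]
  | None, None => false
  end.

Lemma hadj_sym : symmetric hadj.
Proof.
case=> [o|] [o'|] //=; rewrite orbCA; congr [|| _, _ | _].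
by apply/eqP/eqP => ->; rewrite mateK.
Qed.

Lemma hadj_irr : irreflexive hadj.
Proof.
by case=> [o|] //=; rewrite eq_sym (negbTE (succ_neq o)) eq_sym (negbTE (mate_neq o)).
Qed.

Definition hedge := ((occ + occ) + 'I_m)%type.

Definition esrc (e : hedge) : hvert :=
  match e with
  | inl (inl _) => None
  | inl (inr o) => Some o
  | inr i => Some (i, ord0)
  end.

Definition etgt (e : hedge) : hvert :=
  match e with
  | inl (inl o) => Some o
  | inl (inr o) => Some (succ o)
  | inr i => Some (i, ord_max)
  end.

Lemma mate_clause_pair o :
  [set Some o; Some (mate o)]
  = [set Some (o.1, ord0); Some (o.1, ord_max)] :> {set hvert}.
Proof.
case: o => i b; case: (ord2P b) => ->; first by rewrite mate_ord0.
by rewrite -mate_ord0 mateK setUC.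
Qed.

Lemma ends_inj : injective (fun e => [set esrc e; etgt e]).
Proof.
move=> e e' /eq_set2[[E1 E2]|[E1 E2]];
  case: e e' E1 E2 => [[o|o]|i] [[o'|o']|i'] //= E1 E2.
- by case: E2 => ->.
- by case: E1 => ->.
- by case: E1 E2 => -> [succ_o]; have := succ_clause_neq (i', ord0); rewrite succ_o eqxx.
- by case: E1 E2 => <- [succ_o]; have := succ_clause_neq (i, ord0); rewrite -succ_o eqxx.
- by case: E1 => ->.
- by case: E1 E2 => -> [succ_o]; have := succ_succ_neq o'; rewrite succ_o eqxx.
- case: E1 E2 => -> [succ_o].
  by have := succ_clause_neq (i', ord_max); rewrite succ_o eqxx.
- case: E2 E1 => <- [succ_o].
  by have := succ_clause_neq (i, ord_max); rewrite -succ_o eqxx.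
Qed.

Lemma ends_edge e : esrc e != etgt e /\ hadj (esrc e) (etgt e).
Proof.
case: e => [[o|o]|i] //=; rewrite (inj_eq Some_inj).
- by rewrite eq_sym succ_neq eqxx.
- by rewrite -mate_ord0 eq_sym mate_neq eqxx !orbT.
Qed.

Lemma ends_onto x y : x != y -> hadj x y -> exists e, [set x; y] = [set esrc e; etgt e].
Proof.
case: x y => [o|] [o'|] //= _.
- case/or3P => /eqP ->; first by exists (inl (inr o)).
    by exists (inl (inr o')); rewrite setUC.
  by exists (inr o.1); rewrite mate_clause_pair.
- by exists (inl (inl o)); rewrite setUC.
- by exists (inl (inl o')).
Qed.

Lemma nedges_hadj : nedges hadj = 5 * m.
Proof.
rewrite (nedges_eq_card ends_inj ends_edge ends_onto).
by rewrite !card_sum !card_prod !card_ord; lia.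
Qed.

Lemma density_hadj : density hadj = ((5 * m)%:R / (2 * m + 1)%:R)%R.
Proof.
by rewrite /density nedges_hadj card_option card_prod !card_ord addn1 (mulnC 2).
Qed.

Definition branch (x : hvert) : gvert c :=
  if x is Some o then Some (inl (inl (inl (inc o)))) else None.
Definition sub_a (w : Inc c) (k : 'I_2) : gvert c := Some (inl (inr (w, k))).
Definition sub_cycle (w : Inc c) (k : 'I_2) : gvert c := Some (inl (inl (inr (w, k)))).
Definition tri (w : Inc c) : gvert c := Some (inr w).

Definition hpath (x y : hvert) : seq (gvert c) :=
  match x, y with
  | None, Some o => [:: sub_a (inc o) ord0; sub_a (inc o) ord_max]
  | Some o, None => [:: sub_a (inc o) ord_max; sub_a (inc o) ord0]
  | Some o, Some o' =>
      if o' == succ o then [:: sub_cycle (inc o) ord0; sub_cycle (inc o) ord_max]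
      else if o == succ o' then [:: sub_cycle (inc o') ord_max; sub_cycle (inc o') ord0]
      else [:: tri (inc o); tri (inc o')]
  | None, None => [::]
  end.

Definition owner (z : gvert c) : {set hvert} :=
  match z with
  | Some (inl (inr (w, _))) => [set x | if x is Some o then inc o == w else true]
  | Some (inl (inl (inr (w, _)))) =>
      [set x | if x is Some o then (inc o == w) || nextc pos w (inc o) else false]
  | Some (inr w) => [set x | if x is Some o then o.1 == (val w).2 else false]
  | _ => set0
  end.

Lemma owner_sub_a o k : owner (sub_a (inc o) k) = [set None; Some o].
Proof. by apply/setP => -[o'|]; rewrite !inE //= (inj_eq inc_inj). Qed.

Lemma owner_sub_cycle o k : owner (sub_cycle (inc o) k) = [set Some o; Some (succ o)].
Proof.
by apply/setP => -[o'|]; rewrite !inE //= (inj_eq inc_inj) -/(cyc _ _) cyc_succE.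
Qed.

Lemma owner_tri o : owner (tri (inc o)) = [set Some o; Some (mate o)].
Proof.
apply/setP => -[o'|]; rewrite !inE //=; apply/eqP/orP => [/same_clause|].
  by case=> ->; rewrite eqxx ?orbT; [left | right].
by case=> /eqP[->].
Qed.

Lemma owner_hpath x y z : hadj x y -> z \in hpath x y -> owner z = [set x; y].
Proof.
case: x y => [o|] [o'|] //=; last 2 first.
- by move=> _; rewrite !inE => /orP[]/eqP->; rewrite owner_sub_a setUC.
- by move=> _; rewrite !inE => /orP[]/eqP->; rewrite owner_sub_a.
case: eqVneq => [-> _ | _].
  by rewrite !inE => /orP[]/eqP->; rewrite owner_sub_cycle.
case: eqVneq => [-> _ | _ /= /eqP ->].
  by rewrite !inE => /orP[]/eqP->; rewrite owner_sub_cycle setUC.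
by rewrite !inE => /orP[]/eqP->; rewrite owner_tri // mateK setUC.
Qed.

Lemma branch_inj : injective branch.
Proof.
by case=> [o|] [o'|] //= [var_eq clause_eq]; rewrite (var_inj_clause clause_eq var_eq).
Qed.

Lemma sub_a_notin w k : sub_a w k \notin codom branch.
Proof. by apply/codomP => -[[o|]]. Qed.

Lemma sub_cycle_notin w k : sub_cycle w k \notin codom branch.
Proof. by apply/codomP => -[[o|]]. Qed.

Lemma tri_notin w : tri w \notin codom branch.
Proof. by apply/codomP => -[[o|]]. Qed.

Lemma sub_a_neq w : sub_a w ord_max != sub_a w ord0.
Proof. by apply/eqP => -[]. Qed.

Lemma sub_cycle_neq w : sub_cycle w ord0 != sub_cycle w ord_max.
Proof. by apply/eqP => -[]. Qed.

Lemma tri_eq w w' : (tri w == tri w') = (w == w').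
Proof. by apply/eqP/eqP => [[]|->]. Qed.

Lemma hpath_spec x y : hadj x y ->
  [/\ size (hpath x y) <= 2, hpath y x = rev (hpath x y),
      path (gadj c pos) (branch x) (rcons (hpath x y) (branch y)),
      uniq (hpath x y) & all (fun w => w \notin codom branch) (hpath x y)].
Proof.
case: x y => [o|] [o'|] //=; last 2 first.
- by move=> _; split; rewrite //= ?inE ?sub_a_notin ?sub_a_neq /gadj //= ?eqxx.
- by move=> _; split; rewrite //= ?inE ?sub_a_notin 1?eq_sym ?sub_a_neq /gadj //= ?eqxx.
case: eqVneq => [-> _ | o'_succ].
  have succ_edge : nextc pos (inc o) (inc (succ o)) := cyc_succ o.
  rewrite eq_sym (negbTE (succ_succ_neq o)).
  by split; rewrite //= ?inE ?sub_cycle_notin ?sub_cycle_neq /gadj //= ?succ_edge ?eqxx.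
case: eqVneq => [-> _ | o_succ /= /eqP o'_mate]; subst.
  have succ_edge : nextc pos (inc o') (inc (succ o')) := cyc_succ o'.
  by split; rewrite //= ?inE ?sub_cycle_notin 1?eq_sym ?sub_cycle_neq /gadj //=
    ?succ_edge ?eqxx ?orbT.
have mate_inc : inc o != inc (mate o) by rewrite (inj_eq inc_inj) eq_sym mate_neq.
by split; rewrite //= ?inE ?tri_notin ?tri_eq ?mate_inc /gadj //= ?mate_inc ?eqxx ?orbT.
Qed.

End Construction.

Theorem lemma4 (p m : nat) (c : 'I_m -> {set 'I_p})
    (pos : 'I_p -> 'I_m -> nat) :
  (forall i, #|c i| = 3) ->
  (forall j, 3 <= deg c j) ->
  cycle_order c pos ->
  (exists sigma : 'I_p -> bool, forall i, #|[set x in c i | sigma x]| = 1) ->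
  exists (V : finType) (eH : rel V),
    [/\ symmetric eH, irreflexive eH,
        density eH = ((5 * m)%:R / (2 * m + 1)%:R)%R &
        shallow1_topminor eH (gadj c pos)].
Proof.
move=> card_clause deg_ge3 pos_cycle [sigma one_true].
exists (hvert m), (hadj pos card_clause one_true); split.
- exact: hadj_sym.
- exact: hadj_irr.
- exact: density_hadj.
apply: (shallow1_topminor_owner (owner := owner pos card_clause one_true)).
- exact: branch_inj.
- exact: hpath_spec.
- exact: owner_hpath.
Qed.
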